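(* The Muchnik degrees of pandemic numberings and of hyperimmune sets coincide: for every oracle $X\subseteq\omega$, $X$ computes a pandemic numbering if and only if $X$ computes a hyperimmune set.
   Context: A numbering of the finite subsets of $\omega$ is a map $e\mapsto D_e$ from $\omega$ onto the finite subsets of $\omega$; an oracle $X$ computes such a numbering if the relation $\{(e,x): x\in D_e\}$ and the function $e\mapsto\max D_e$ (equivalently, $e\mapsto$ a canonical code of $D_e$) are $X$-computable. An order function is a recursive, nondecreasing, unbounded $h:\omega\to\omega$ with $h(0)\ge2$. For a numbering $D$ and $R\subseteq\omega$, $D$ is $h$-endemic to $R$ if there are infinitely many $e$ with $|D_e|\ge h(e)$ and $D_e\subseteq R$. $D$ is a pandemic numbering if there is an order function $h$ such that $D$ is $h$-endemic to every infinite recursive set $R$. A set $H\subseteq\omega$ is hyperimmune if it is infinite and the function enumerating its elements in increasing order is not dominated by any recursive function. *)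

From mathcomp Require Import all_boot.
Set Implicit Arguments. Unset Strict Implicit. Unset Printing Implicit Defensive.

Definition oracle := nat -> bool.

Definition cpair (a b : nat) : nat := ((a + b) * (a + b).+1) %/ 2 + b.

Inductive code : Type :=
| cZero
| cSucc
| cId
| cFst
| cSnd
| cOracle
| cComp (f g : code)
| cPair (f g : code)
| cRec  (f g : code)
| cMu   (f : code).

Inductive eval (X : oracle) : code -> nat -> nat -> Prop :=
| ev_zero x : eval X cZero x 0
| ev_succ x : eval X cSucc x x.+1
| ev_id x : eval X cId x x
| ev_fst a b : eval X cFst (cpair a b) a
| ev_snd a b : eval X cSnd (cpair a b) b
| ev_oracle x : eval X cOracle x (nat_of_bool (X x))
| ev_comp f g x y z : eval X g x y -> eval X f y z -> eval X (cComp f g) x z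
| ev_pair f g x y z : eval X f x y -> eval X g x z -> eval X (cPair f g) x (cpair y z)
| ev_rec0 f g x y : eval X f x y -> eval X (cRec f g) (cpair x 0) y
| ev_recS f g x n y z :
    eval X (cRec f g) (cpair x n) y ->
    eval X g (cpair x (cpair n y)) z ->
    eval X (cRec f g) (cpair x n.+1) z
| ev_mu f x n :
    eval X f (cpair x n) 0 ->
    (forall m, m < n -> exists k, eval X f (cpair x m) k.+1) ->
    eval X (cMu f) x n.

Definition computable_in (X : oracle) (f : nat -> nat) : Prop :=
  exists c : code, forall x, eval X c x (f x).

Definition set_computable_in (X : oracle) (A : nat -> bool) : Prop :=
  computable_in X (fun x => nat_of_bool (A x)).

Definition rel_computable_in (X : oracle) (R : nat -> nat -> bool) : Prop :=
  exists c : code, forall a b, eval X c (cpair a b) (nat_of_bool (R a b)).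

Definition empty_oracle : oracle := fun _ => false.
Definition recursive (f : nat -> nat) : Prop := computable_in empty_oracle f.
Definition recursive_set (A : nat -> bool) : Prop := set_computable_in empty_oracle A.

(* Finite sets via canonical codes: the finite set with canonical index c is
   { x | bit x of c is 1 }, i.e. c = sum_{x in D} 2^x. *)
Definition canset (c : nat) : nat -> bool := fun x => odd (c %/ 2 ^ x).

(* A numbering of the finite subsets of omega, presented by e |-> canonical
   code of D_e.  D_e := canset (D e). *)
Definition numbering (D : nat -> nat) : Prop :=
  forall s : seq nat, exists e, forall x, canset (D e) x = (x \in s).

Definition computes_numbering (X : oracle) (D : nat -> nat) : Prop :=
  rel_computable_in X (fun e x => canset (D e) x) /\ computable_in X D.

Definition infinite_set (A : nat -> bool) : Prop :=
  forall N, exists x, N <= x /\ A x.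

Definition order_function (h : nat -> nat) : Prop :=
  recursive h /\ (forall m n, m <= n -> h m <= h n) /\
  (forall N, exists n, N <= h n) /\ 2 <= h 0.

Definition card_geq (A : nat -> bool) (k : nat) : Prop :=
  exists s : seq nat, uniq s /\ k <= size s /\ all A s.

Definition subset_of (A B : nat -> bool) : Prop := forall x, A x -> B x.

Definition endemic (h : nat -> nat) (D : nat -> nat) (R : nat -> bool) : Prop :=
  forall N, exists e, N <= e /\ card_geq (canset (D e)) (h e) /\ subset_of (canset (D e)) R.

Definition pandemic (D : nat -> nat) : Prop :=
  exists h, order_function h /\
    forall R, infinite_set R -> recursive_set R -> endemic h D R.

Definition enumerates (p : nat -> nat) (H : nat -> bool) : Prop :=
  (forall n, p n < p n.+1) /\ (forall x, H x <-> exists n, p n = x).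

Definition dominates (g p : nat -> nat) : Prop :=
  exists N, forall n, N <= n -> p n <= g n.

Definition hyperimmune (H : nat -> bool) : Prop :=
  infinite_set H /\
  forall p, enumerates p H -> ~ exists g, recursive g /\ dominates g p.

From mathcomp Require Import all_boot.
From mathcomp Require Import zify.
From Stdlib Require Import Classical.
Set Implicit Arguments. Unset Strict Implicit. Unset Printing Implicit Defensive.

(* Pandemic to hyperimmune: if [X] computes a pandemic numbering [D] with
   order function [h], the sums [f n = \sum_(k <= n) (D k).+1] are
   [X]-computable, strictly increasing and bound every element of [D_e]
   for [e <= n], so the range of [f] is [X]-computable.  If a recursive [g]
   dominated [f], let [G] be the running maximum of [g] and [E k] the first
   [e] with [k.+2 <= h e]; the infinite recursive set [{G (E k) + k}] meets
   every late [D_e] in fewer than [h e] points, contradicting endemicity.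

   Hyperimmune to pandemic: let [p] enumerate an [X]-computable hyperimmune
   set.  Halting computations without oracle have finite certificates, so
   "[x] is certified, within budget [b], to lie in the set decided by program
   [i]" is decidable and eventually true of every member.  List all finite
   sets at odd indices and, at index [2 <i, n>], the elements certified
   within budget [p n].  For a recursive infinite [R] decided by program [i],
   a recursive [g] finds for each [n] a budget certifying [2 <i, n> + 2]
   elements; as [p] escapes [g] infinitely often, the numbering is
   [(e + 2)]-endemic to [R]. *)

(** * Cantor pairing *)

Definition unpair_step (p : nat * nat) : nat * nat :=
  if p.1 is a.+1 then (a, p.2.+1) else (p.2.+1, 0).
Definition unpair (w : nat) : nat * nat := iter w unpair_step (0, 0).
Definition cfst w := (unpair w).1.
Definition csnd w := (unpair w).2.

Lemma triangle_succ s : (s.+1 * s.+2) %/ 2 = (s * s.+1) %/ 2 + s.+1.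
Proof.
have -> : s.+1 * s.+2 = s * s.+1 + s.+1 * 2 by nia.
by rewrite divnDr ?dvdn_mull // mulnK.
Qed.

Lemma cpair_unpair_step p :
  cpair (unpair_step p).1 (unpair_step p).2 = (cpair p.1 p.2).+1.
Proof.
case: p => [[|a] b]; rewrite /unpair_step /cpair /=.
- rewrite !addn0 add0n triangle_succ; lia.
- rewrite addSn addnS; lia.
Qed.

Lemma cpair_unpair w : cpair (cfst w) (csnd w) = w.
Proof.
rewrite /cfst /csnd /unpair; elim: w => [|w IH] //=.
by rewrite cpair_unpair_step IH.
Qed.

Lemma cpair_eq0 a b : cpair a b = 0 -> a = 0 /\ b = 0.
Proof.
rewrite /cpair => H; have b0 : b = 0 by lia.
subst b; rewrite addn0 in H; split=> //.
case: a H => // a; rewrite addn0 => H.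
have : 1 <= a.+1 * a.+2 %/ 2 by rewrite leq_divRL //; nia.
by rewrite H.
Qed.

Lemma unpair_cpair a b : unpair (cpair a b) = (a, b).
Proof.
move: {2}(cpair a b) (erefl (cpair a b)) => n; elim: n a b => [|n IH] a b.
  by move=> /cpair_eq0 [-> ->].
have pred_step p : cpair (unpair_step p).1 (unpair_step p).2 = n.+1 ->
    cpair p.1 p.2 = n.
  by rewrite cpair_unpair_step => /succn_inj.
case: b => [|b] E.
- case: a E => [|a] E; first by move: E; rewrite /cpair.
  have E' := pred_step (0, a) E.
  by rewrite E /unpair iterS -/(unpair n) -E' (IH _ _ E').
- have E' := pred_step (a.+1, b) E.
  by rewrite E /unpair iterS -/(unpair n) -E' (IH _ _ E').
Qed.

Lemma cfst_cpair a b : cfst (cpair a b) = a.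
Proof. by rewrite /cfst unpair_cpair. Qed.
Lemma csnd_cpair a b : csnd (cpair a b) = b.
Proof. by rewrite /csnd unpair_cpair. Qed.

Lemma cpair_inj a b c d : cpair a b = cpair c d -> a = c /\ b = d.
Proof. by move=> E; have := unpair_cpair a b; rewrite E unpair_cpair => -[]. Qed.

Lemma leq_cpair_r a b : b <= cpair a b.
Proof. rewrite /cpair; lia. Qed.

(** * Closure properties of relatively computable functions *)

Fixpoint prim_rec (b : nat) (s : nat -> nat -> nat) (n : nat) : nat :=
  if n is k.+1 then s k (prim_rec b s k) else b.

(* A transparent copy of [if]: [computability] below cannot match an
   [if] whose branches depend on the bound variable, but can match [ite]. *)
Definition ite {T} (b : bool) (x y : T) := if b then x else y.

Definition count_below n (P : nat -> bool) := count P (iota 0 n).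
Definition has_below n (P : nat -> bool) := has P (iota 0 n).
Definition all_below n (P : nat -> bool) := all P (iota 0 n).

Section ComputableClosure.
Variable X : oracle.
Implicit Types (A B N W : nat -> nat) (P Q : nat -> bool).

Lemma eval_cfst w : eval X cFst w (cfst w).
Proof. by have := ev_fst X (cfst w) (csnd w); rewrite cpair_unpair. Qed.
Lemma eval_csnd w : eval X cSnd w (csnd w).
Proof. by have := ev_snd X (cfst w) (csnd w); rewrite cpair_unpair. Qed.

Lemma computable_ext A B : A =1 B -> computable_in X A -> computable_in X B.
Proof. by move=> E [c Hc]; exists c => x; rewrite -E. Qed.

Lemma computable_id : computable_in X (fun x => x).
Proof. by exists cId => x; constructor. Qed.

Lemma computable_const n : computable_in X (fun _ => n).
Proof.
exists (iter n (cComp cSucc) cZero) => x; elim: n => [|n IH] /=; first by constructor.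
by apply: ev_comp IH _; constructor.
Qed.

Lemma computable_comp (f : nat -> nat) A :
  computable_in X f -> computable_in X A -> computable_in X (fun x => f (A x)).
Proof. by move=> [cf Hf] [cA HA]; exists (cComp cf cA) => x; apply: ev_comp. Qed.

Lemma computable_succ A : computable_in X A -> computable_in X (fun x => (A x).+1).
Proof. by apply: computable_comp; exists cSucc => x; constructor. Qed.

Lemma computable_cpair A B : computable_in X A -> computable_in X B ->
  computable_in X (fun x => cpair (A x) (B x)).
Proof. by move=> [cA HA] [cB HB]; exists (cPair cA cB) => x; apply: ev_pair. Qed.

Lemma computable_cfst A : computable_in X A -> computable_in X (fun x => cfst (A x)).
Proof. by apply: computable_comp; exists cFst; apply: eval_cfst. Qed.
Lemma computable_csnd A : computable_in X A -> computable_in X (fun x => csnd (A x)).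
Proof. by apply: computable_comp; exists cSnd; apply: eval_csnd. Qed.

Lemma computable_cfst_id : computable_in X cfst.
Proof. exact: computable_cfst computable_id. Qed.
Lemma computable_csnd_id : computable_in X csnd.
Proof. exact: computable_csnd computable_id. Qed.

Lemma computable_prim_rec A (S : nat -> nat -> nat -> nat) N : computable_in X A ->
  computable_in X (fun z => S (cfst z) (cfst (csnd z)) (csnd (csnd z))) ->
  computable_in X N -> computable_in X (fun x => prim_rec (A x) (S x) (N x)).
Proof.
move=> [cA HA] [cS HS] [cN HN]; exists (cComp (cRec cA cS) (cPair cId cN)) => x.
apply: ev_comp; first by apply: ev_pair; [constructor | apply: HN].
elim: (N x) => [|n IH] /=; first by constructor.
apply: ev_recS IH _.
by have := HS (cpair x (cpair n (prim_rec (A x) (S x) n))); rewrite !(cfst_cpair, csnd_cpair).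
Qed.

Lemma computable_mu (F : nat -> nat -> nat) N :
  computable_in X (fun z => F (cfst z) (csnd z)) ->
  (forall x, F x (N x) = 0 /\ forall m, m < N x -> F x m <> 0) -> computable_in X N.
Proof.
move=> [cF HF] HN; exists (cMu cF) => x; have [F0 Fpos] := HN x.
constructor; first by have := HF (cpair x (N x)); rewrite cfst_cpair csnd_cpair F0.
move=> m lt_m; exists (F x m).-1.
have := HF (cpair x m); rewrite cfst_cpair csnd_cpair prednK //.
by case: (F x m) (Fpos _ lt_m).
Qed.

Lemma computable_iter N (f : nat -> nat -> nat) W : computable_in X N ->
  computable_in X (fun z => f (cfst z) (csnd z)) -> computable_in X W ->
  computable_in X (fun x => iter (N x) (f x) (W x)).
Proof.
move=> HN Hf HW.
have Hstep : computable_in X (fun z => f (cfst z) (csnd (csnd z))).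
  apply: computable_ext (computable_comp Hf
    (computable_cpair computable_cfst_id (computable_csnd computable_csnd_id))) => z.
  by rewrite cfst_cpair csnd_cpair.
apply: computable_ext (computable_prim_rec (S := fun x _ acc => f x acc) HW Hstep HN) => x.
by elim: (N x) => //= n ->.
Qed.

Lemma computable_add A B : computable_in X A -> computable_in X B ->
  computable_in X (fun x => A x + B x).
Proof.
move=> HA HB; have Hsucc := computable_succ computable_csnd_id.
apply: computable_ext (computable_iter (f := fun _ => succn) HB Hsucc HA) => x.
exact: iter_succn.
Qed.

Lemma computable_double A : computable_in X A -> computable_in X (fun x => (A x).*2).
Proof. by move=> HA; apply: computable_ext (computable_add HA HA) => x; rewrite addnn. Qed.

Lemma computable_pred A : computable_in X A -> computable_in X (fun x => (A x).-1).
Proof.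
apply: computable_comp.
have := computable_prim_rec (S := fun _ k _ => k) (computable_const 0)
  (computable_cfst computable_csnd_id) computable_id.
by apply: computable_ext => -[].
Qed.

Lemma computable_sub A B : computable_in X A -> computable_in X B ->
  computable_in X (fun x => A x - B x).
Proof.
move=> HA HB; have Hpred := computable_pred computable_csnd_id.
apply: computable_ext (computable_iter (f := fun _ => predn) HB Hpred HA) => x.
exact: iter_predn.
Qed.

Lemma computable_maxn A B : computable_in X A -> computable_in X B ->
  computable_in X (fun x => maxn (A x) (B x)).
Proof.
move=> HA HB; apply: computable_ext (computable_add HA (computable_sub HB HA)) => x.
by rewrite maxnE.
Qed.

Lemma computable_mul A B : computable_in X A -> computable_in X B ->
  computable_in X (fun x => A x * B x).
Proof.
move=> HA HB.
have Hstep := computable_add (computable_comp HA computable_cfst_id) computable_csnd_id.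
apply: computable_ext (computable_iter (f := fun x => addn (A x)) HB Hstep
  (computable_const 0)) => x.
exact: iter_addn_0.
Qed.

Lemma computable_exp A B : computable_in X A -> computable_in X B ->
  computable_in X (fun x => A x ^ B x).
Proof.
move=> HA HB.
have Hstep := computable_mul (computable_comp HA computable_cfst_id) computable_csnd_id.
apply: computable_ext (computable_iter (f := fun x => muln (A x)) HB Hstep
  (computable_const 1)) => x.
exact: iter_muln_1.
Qed.

Lemma computable_constb b : set_computable_in X (fun _ => b).
Proof. exact: computable_const. Qed.

Lemma computable_leq A B : computable_in X A -> computable_in X B ->
  set_computable_in X (fun x => A x <= B x).
Proof.
move=> HA HB.
apply: computable_ext (computable_sub (computable_const 1) (computable_sub HA HB)) => x.
by case: leqP; lia.
Qed.

Lemma computable_eqn A B : computable_in X A -> computable_in X B ->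
  set_computable_in X (fun x => A x == B x).
Proof.
move=> HA HB; apply: computable_ext (computable_sub (computable_const 1)
  (computable_add (computable_sub HA HB) (computable_sub HB HA))) => x.
by case: eqP; lia.
Qed.

Lemma computable_negb P : set_computable_in X P -> set_computable_in X (fun x => ~~ P x).
Proof.
move=> HP; apply: computable_ext (computable_sub (computable_const 1) HP) => x.
by case: (P x).
Qed.

Lemma computable_andb P Q : set_computable_in X P -> set_computable_in X Q ->
  set_computable_in X (fun x => P x && Q x).
Proof.
move=> HP HQ; apply: computable_ext (computable_mul HP HQ) => x.
by case: (P x); case: (Q x).
Qed.

Lemma computable_orb P Q : set_computable_in X P -> set_computable_in X Q ->
  set_computable_in X (fun x => P x || Q x).
Proof.
move=> /computable_negb HP /computable_negb HQ.
apply: computable_ext (computable_negb (computable_andb HP HQ)) => x.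
by case: (P x); case: (Q x).
Qed.

Lemma computable_ite P A B : set_computable_in X P ->
  computable_in X A -> computable_in X B ->
  computable_in X (fun x => ite (P x) (A x) (B x)).
Proof.
move=> HP HA HB; apply: computable_ext (computable_add (computable_mul HP HA)
  (computable_mul (computable_negb HP) HB)) => x.
by rewrite /ite; case: (P x); rewrite /= ?mul1n ?mul0n ?addn0.
Qed.

Lemma computable_iteb P Q1 Q2 : set_computable_in X P ->
  set_computable_in X Q1 -> set_computable_in X Q2 ->
  set_computable_in X (fun x => ite (P x) (Q1 x) (Q2 x)).
Proof.
move=> HP HQ1 HQ2; apply: computable_ext (computable_ite HP HQ1 HQ2) => x.
by rewrite /ite; case: (P x).
Qed.

Lemma computable_odd A : computable_in X A -> set_computable_in X (fun x => odd (A x)).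
Proof.
apply: (computable_comp (f := fun n => nat_of_bool (odd n))).
have := computable_iter (f := fun _ b => 1 - b) computable_id
  (computable_sub (computable_const 1) computable_csnd_id) (computable_const 0).
apply: computable_ext => n; elim: n => //= n ->; by case: (odd n).
Qed.

Lemma iota0S n : iota 0 n.+1 = rcons (iota 0 n) n.
Proof. by rewrite -addn1 iotaD cats1. Qed.

Lemma computable_count_below N (P : nat -> nat -> bool) : computable_in X N ->
  set_computable_in X (fun z => P (csnd z) (cfst z)) ->
  computable_in X (fun x => count_below (N x) (P x)).
Proof.
move=> HN HP.
have Hstep : computable_in X
    (fun z => csnd (csnd z) + nat_of_bool (P (cfst z) (cfst (csnd z)))).
  apply: computable_add; first exact: computable_csnd computable_csnd_id.
  apply: computable_ext (computable_comp HP
    (computable_cpair (computable_cfst computable_csnd_id) computable_cfst_id)) => z.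
  by rewrite cfst_cpair csnd_cpair.
apply: computable_ext (computable_prim_rec
  (S := fun x k acc => acc + nat_of_bool (P x k)) (computable_const 0) Hstep HN) => x.
rewrite /count_below; elim: (N x) => // n IH.
by rewrite iota0S -cats1 count_cat /= addn0 -IH.
Qed.

Lemma computable_has_below N (P : nat -> nat -> bool) : computable_in X N ->
  set_computable_in X (fun z => P (csnd z) (cfst z)) ->
  set_computable_in X (fun x => has_below (N x) (P x)).
Proof.
move=> HN HP.
apply: computable_ext (computable_leq (computable_const 1) (computable_count_below HN HP)).
by move=> x; rewrite /has_below has_count.
Qed.

Lemma computable_all_below N (P : nat -> nat -> bool) : computable_in X N ->
  set_computable_in X (fun z => P (csnd z) (cfst z)) ->
  set_computable_in X (fun x => all_below (N x) (P x)).
Proof.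
move=> HN /computable_negb HP.
apply: computable_ext (computable_negb (computable_has_below (P := fun x y => ~~ P x y) HN HP)).
move=> x; rewrite /has_below /all_below -all_predC.
by congr nat_of_bool; apply: eq_all => y /=; rewrite negbK.
Qed.

Lemma computable_div A B : computable_in X A -> computable_in X B ->
  computable_in X (fun x => A x %/ B x).
Proof.
move=> HA HB.
have HB0 : set_computable_in X (fun x => B x == 0) := computable_eqn HB (computable_const 0).
have Hcount := computable_count_below (P := fun x q => q.+1 * B x <= A x) HA
  (computable_leq (computable_mul (computable_succ computable_cfst_id)
     (computable_comp HB computable_csnd_id)) (computable_comp HA computable_csnd_id)).
apply: computable_ext (computable_ite HB0 (computable_const 0) Hcount) => x.
rewrite /ite; case: eqP => [->|/eqP B0]; first by rewrite divn0.
rewrite /count_below -size_filter.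
rewrite (eq_filter (a2 := fun q => q < 0 + A x %/ B x)); last first.
  by move=> q; rewrite add0n leq_divRL // lt0n.
by rewrite filter_iota_ltn ?leq_div // size_iota.
Qed.

End ComputableClosure.

(* Extended with [::=] below, once further closure lemmas are available. *)
Ltac computability_ext := fail.

Ltac computability :=
  cbv beta;
  first [ assumption | computability_ext
  | lazymatch goal with
  | |- computable_in _ (fun _ => ?c) => apply computable_const
  | |- set_computable_in _ (fun _ => ?c) => apply computable_constb
  | |- computable_in _ (fun x => x) => apply computable_id
  | |- computable_in ?X (fun x => nat_of_bool (@?P x)) =>
        change (set_computable_in X P); computability
  | |- computable_in _ (fun x => (@?A x).+1) => apply (computable_succ (A := A)); computability
  | |- computable_in _ (fun x => (@?A x).-1) => apply (computable_pred (A := A)); computability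
  | |- computable_in _ (fun x => (@?A x).*2) => apply (computable_double (A := A)); computability
  | |- computable_in _ (fun x => @?A x + @?B x) =>
        apply (computable_add (A := A) (B := B)); computability
  | |- computable_in _ (fun x => @?A x - @?B x) =>
        apply (computable_sub (A := A) (B := B)); computability
  | |- computable_in _ (fun x => maxn (@?A x) (@?B x)) =>
        apply (computable_maxn (A := A) (B := B)); computability
  | |- computable_in _ (fun x => @?A x * @?B x) =>
        apply (computable_mul (A := A) (B := B)); computability
  | |- computable_in _ (fun x => @?A x ^ @?B x) =>
        apply (computable_exp (A := A) (B := B)); computability
  | |- computable_in _ (fun x => @?A x %/ @?B x) =>
        apply (computable_div (A := A) (B := B)); computability
  | |- computable_in _ (fun x => cpair (@?A x) (@?B x)) =>
        apply (computable_cpair (A := A) (B := B)); computability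
  | |- computable_in _ (fun x => cfst (@?A x)) => apply (computable_cfst (A := A)); computability
  | |- computable_in _ (fun x => csnd (@?A x)) => apply (computable_csnd (A := A)); computability
  | |- computable_in _ (fun x => ite (@?P x) (@?A x) (@?B x)) =>
        apply (computable_ite (P := P) (A := A) (B := B)); computability
  | |- computable_in _ (fun x => prim_rec (@?F x) (@?S x) (@?N x)) =>
        apply (computable_prim_rec (A := F) (S := S) (N := N)); computability
  | |- computable_in _ (fun x => iter (@?N x) (@?f x) (@?W x)) =>
        apply (computable_iter (N := N) (f := f) (W := W)); computability
  | |- computable_in _ (fun x => count_below (@?N x) (@?P x)) =>
        apply (computable_count_below (N := N) (P := P)); computability
  | |- set_computable_in _ (fun x => @?P x && @?Q x) =>
        apply (computable_andb (P := P) (Q := Q)); computability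
  | |- set_computable_in _ (fun x => @?P x || @?Q x) =>
        apply (computable_orb (P := P) (Q := Q)); computability
  | |- set_computable_in _ (fun x => ~~ @?P x) => apply (computable_negb (P := P)); computability
  | |- set_computable_in _ (fun x => @?A x <= @?B x) =>
        apply (computable_leq (A := A) (B := B)); computability
  | |- set_computable_in _ (fun x => @?A x == @?B x) =>
        apply (computable_eqn (A := A) (B := B)); computability
  | |- set_computable_in _ (fun x => odd (@?A x)) => apply (computable_odd (A := A)); computability
  | |- set_computable_in _ (fun x => ite (@?P x) (@?Q1 x) (@?Q2 x)) =>
        apply (computable_iteb (P := P) (Q1 := Q1) (Q2 := Q2)); computability
  | |- set_computable_in _ (fun x => has_below (@?N x) (@?P x)) =>
        apply (computable_has_below (N := N) (P := P)); computability
  | |- set_computable_in _ (fun x => all_below (@?N x) (@?P x)) =>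
        apply (computable_all_below (N := N) (P := P)); computability
  | |- set_computable_in _ (fun x => ?Q (@?A x)) =>
        apply (computable_comp (f := fun y => nat_of_bool (Q y)) (A := A));
          [assumption | computability]
  | |- computable_in _ (fun x => ?f (@?A x)) =>
        apply (computable_comp (f := f) (A := A)); [assumption | computability]
  end ].

(** * Finite sequences coded as numbers *)

Fixpoint seq_code (l : seq nat) : nat :=
  if l is a :: l' then (cpair a (seq_code l')).+1 else 0.
Definition code_behead w := csnd w.-1.
Definition code_head w := cfst w.-1.
Definition code_has_index w j := iter j code_behead w != 0.
Definition code_nth w j := code_head (iter j code_behead w).
(* Searching the indices below [w] suffices because [size l <= seq_code l]. *)
Definition code_has w (P : nat -> bool) :=
  has_below w (fun j => code_has_index w j && P (code_nth w j)).
Definition code_mem v w := code_has w (fun u => u == v).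

Lemma code_behead_cons a l : code_behead (seq_code (a :: l)) = seq_code l.
Proof. by rewrite /code_behead /= csnd_cpair. Qed.
Lemma code_head_cons a l : code_head (seq_code (a :: l)) = a.
Proof. by rewrite /code_head /= cfst_cpair. Qed.
Lemma code_behead0 : code_behead 0 = 0.
Proof. by rewrite /code_behead /= -(csnd_cpair 0 0). Qed.

Lemma iter_code_behead j l : iter j code_behead (seq_code l) = seq_code (drop j l).
Proof.
elim: j l => [|j IH] l; first by rewrite drop0.
rewrite iterSr; case: l => [|a l] /=.
  by rewrite code_behead0; have := IH [::].
by rewrite code_behead_cons IH.
Qed.

Lemma seq_code_eq0 l : (seq_code l == 0) = (l == [::]).
Proof. by case: l. Qed.

Lemma size_le_seq_code l : size l <= seq_code l.
Proof. elim: l => //= a l IH; have := leq_cpair_r a (seq_code l); lia. Qed.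

Lemma seq_code_surj w : exists l, seq_code l = w.
Proof.
elim: w {-2}w (leqnn w) => [|n IH] [|w] le_w; try by exists [::].
have [a [r E]] : exists a r, w = cpair a r.
  by exists (cfst w), (csnd w); rewrite cpair_unpair.
have [|l El] := IH r; first by have := leq_cpair_r a r; lia.
by exists (a :: l); rewrite /= El E.
Qed.

Lemma code_has_index_seq_code l j : code_has_index (seq_code l) j = (j < size l).
Proof.
by rewrite /code_has_index iter_code_behead seq_code_eq0 -size_eq0 size_drop subn_eq0 -ltnNge.
Qed.

Lemma code_nth_seq_code l j : j < size l -> code_nth (seq_code l) j = nth 0 l j.
Proof. by rewrite /code_nth iter_code_behead => lt_j; rewrite (drop_nth 0 lt_j) code_head_cons. Qed.

Lemma code_has_seq_code l P : code_has (seq_code l) P = has P l.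
Proof.
rewrite /code_has /has_below.
apply/hasP/hasP => [[j _ /andP [in_j Pj]]|[x l_x Px]].
  rewrite code_has_index_seq_code in in_j; rewrite code_nth_seq_code // in Pj.
  by exists (nth 0 l j) => //; apply: mem_nth.
exists (index x l).
  by rewrite mem_iota add0n /=; apply: leq_trans (size_le_seq_code l); rewrite index_mem.
by rewrite code_has_index_seq_code index_mem l_x /= code_nth_seq_code ?index_mem // nth_index.
Qed.

Lemma code_mem_seq_code v l : code_mem v (seq_code l) = (v \in l).
Proof.
rewrite /code_mem code_has_seq_code; apply/hasP/idP => [[x l_x /eqP <-]|l_v] //.
by exists v.
Qed.

Section ComputableSeqCode.
Variable X : oracle.
Implicit Types (V W J : nat -> nat).

Lemma computable_code_has_index W J : computable_in X W -> computable_in X J ->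
  set_computable_in X (fun x => code_has_index (W x) (J x)).
Proof. by move=> HW HJ; rewrite /code_has_index /code_behead; computability. Qed.

Lemma computable_code_nth W J : computable_in X W -> computable_in X J ->
  computable_in X (fun x => code_nth (W x) (J x)).
Proof. by move=> HW HJ; rewrite /code_nth /code_head /code_behead; computability. Qed.

Lemma computable_code_has W (P : nat -> nat -> bool) : computable_in X W ->
  set_computable_in X (fun z => P (csnd z) (cfst z)) ->
  set_computable_in X (fun x => code_has (W x) (P x)).
Proof.
move=> HW HP; apply: computable_has_below => //.
have HW2 := computable_comp HW (computable_csnd_id X).
apply: computable_andb.
  exact: computable_code_has_index HW2 (computable_cfst_id X).
have Hnth := computable_code_nth HW2 (computable_cfst_id X).
apply: computable_ext (computable_comp HP
  (computable_cpair Hnth (computable_csnd_id X))) => z.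
by rewrite cfst_cpair csnd_cpair.
Qed.

Lemma computable_code_mem V W : computable_in X V -> computable_in X W ->
  set_computable_in X (fun x => code_mem (V x) (W x)).
Proof.
move=> HV HW; apply: (computable_code_has (P := fun x u => u == V x)) => //.
computability.
Qed.

End ComputableSeqCode.

Ltac computability_ext ::=
  lazymatch goal with
  | |- set_computable_in _ (fun x => code_has_index (@?W x) (@?J x)) =>
        apply (computable_code_has_index (W := W) (J := J)); computability
  | |- computable_in _ (fun x => code_nth (@?W x) (@?J x)) =>
        apply (computable_code_nth (W := W) (J := J)); computability
  | |- set_computable_in _ (fun x => code_has (@?W x) (@?P x)) =>
        apply (computable_code_has (W := W) (P := P)); computability
  | |- set_computable_in _ (fun x => code_mem (@?V x) (@?W x)) =>
        apply (computable_code_mem (V := V) (W := W)); computability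
  end.

(** * Determinism of evaluation *)

Section EvalInversion.
Variable X : oracle.

Lemma eval_compE f g x y : eval X (cComp f g) x y -> exists m, eval X g x m /\ eval X f m y.
Proof. by move=> H; inversion H; subst; eauto. Qed.

Lemma eval_pairE f g x y : eval X (cPair f g) x y ->
  exists a b, y = cpair a b /\ eval X f x a /\ eval X g x b.
Proof. by move=> H; inversion H; subst; eauto 6. Qed.

Lemma eval_recE f g w y : eval X (cRec f g) w y ->
  (exists x, w = cpair x 0 /\ eval X f x y) \/
  (exists x n z, [/\ w = cpair x n.+1, eval X (cRec f g) (cpair x n) z
                   & eval X g (cpair x (cpair n z)) y]).
Proof. by move=> H; inversion H; subst; [left | right; do 3 eexists; split]; eauto. Qed.

Lemma eval_muE f x y : eval X (cMu f) x y ->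
  eval X f (cpair x y) 0 /\ (forall m, m < y -> exists k, eval X f (cpair x m) k.+1).
Proof. by move=> H; inversion H; subst; eauto. Qed.

(* [fix] rather than [elim]: the minimization rule hides its recursive
   premises under [forall m, m < n -> exists k, _]. *)
Lemma eval_functional : forall c x y1, eval X c x y1 -> forall y2, eval X c x y2 -> y1 = y2.
Proof.
fix IH 4 => c x y1 H; destruct H => y2 H'.
- by inversion H'.
- by inversion H'.
- by inversion H'.
- by inversion H'; subst; match goal with E : cpair _ _ = cpair _ _ |- _ => case: (cpair_inj E) end.
- by inversion H'; subst; match goal with E : cpair _ _ = cpair _ _ |- _ => case: (cpair_inj E) end.
- by inversion H'.
- have [m [Hg Hf]] := eval_compE H'.
  by move: (IH _ _ _ H _ Hg) => E; subst; exact: IH _ _ _ H0 _ Hf.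
- have [a [b [-> [Hf Hg]]]] := eval_pairE H'.
  by rewrite (IH _ _ _ H _ Hf) (IH _ _ _ H0 _ Hg).
- case: (eval_recE H') => [[x' [E Hf]]|[x' [n [z [E _ _]]]]]; last by case: (cpair_inj E).
  by case: (cpair_inj E) => ? _; subst; exact: IH _ _ _ H _ Hf.
- case: (eval_recE H') => [[x' [E _]]|[x' [n' [z' [E Hrec Hg]]]]]; first by case: (cpair_inj E).
  case: (cpair_inj E) => ? /succn_inj ?; subst.
  by move: (IH _ _ _ H _ Hrec) => E'; subst; exact: IH _ _ _ H0 _ Hg.
- case: (eval_muE H') => Hy2 below_y2.
  case: (ltngtP n y2) => // lt_n.
  + by case: (below_y2 _ lt_n) => k Hk; have := IH _ _ _ H _ Hk.
  + by case: (H0 _ lt_n) => k Hk; have := IH _ _ _ Hk _ Hy2.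
Qed.

End EvalInversion.

(** * Certificates of halting computations *)

Fixpoint code_num (c : code) : nat :=
  match c with
  | cZero => cpair 0 0 | cSucc => cpair 1 0 | cId => cpair 2 0
  | cFst => cpair 3 0 | cSnd => cpair 4 0 | cOracle => cpair 5 0
  | cComp f g => cpair 6 (cpair (code_num f) (code_num g))
  | cPair f g => cpair 7 (cpair (code_num f) (code_num g))
  | cRec f g => cpair 8 (cpair (code_num f) (code_num g))
  | cMu f => cpair 9 (code_num f)
  end.

Definition judgment c x y := cpair c (cpair x y).

Local Notation jcode J := (cfst J).
Local Notation jin J := (cfst (csnd J)).
Local Notation jout J := (csnd (csnd J)).
Local Notation ctag c := (cfst c).
Local Notation carg c := (csnd c).
Local Notation carg1 c := (cfst (csnd c)).
Local Notation carg2 c := (csnd (csnd c)).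

(* [J] follows by one rule of [eval] for the empty oracle (so [cOracle]
   answers 0) from judgments in [mem]; [ex P] asserts that some judgment
   in [mem] satisfies [P]. *)
Definition justified (ex : (nat -> bool) -> bool) (mem : nat -> bool) (J : nat) : bool :=
  [|| (ctag (jcode J) == 0) && (jout J == 0),
      (ctag (jcode J) == 1) && (jout J == (jin J).+1),
      (ctag (jcode J) == 2) && (jout J == jin J),
      (ctag (jcode J) == 3) && (jout J == cfst (jin J)),
      (ctag (jcode J) == 4) && (jout J == csnd (jin J)),
      (ctag (jcode J) == 5) && (jout J == 0),
      (ctag (jcode J) == 6) &&
        ex (fun K => (jcode K == carg2 (jcode J)) && (jin K == jin J)
                     && mem (judgment (carg1 (jcode J)) (jout K) (jout J))),
      (ctag (jcode J) == 7) && mem (judgment (carg1 (jcode J)) (jin J) (cfst (jout J)))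
                            && mem (judgment (carg2 (jcode J)) (jin J) (csnd (jout J))),
      (ctag (jcode J) == 8) && ite (csnd (jin J) == 0)
        (mem (judgment (carg1 (jcode J)) (cfst (jin J)) (jout J)))
        (ex (fun K => (jcode K == jcode J)
             && (jin K == cpair (cfst (jin J)) (csnd (jin J)).-1)
             && mem (judgment (carg2 (jcode J))
                      (cpair (cfst (jin J)) (cpair (csnd (jin J)).-1 (jout K))) (jout J))))
    | (ctag (jcode J) == 9) && mem (judgment (carg (jcode J)) (cpair (jin J) (jout J)) 0)
      && all_below (jout J) (fun m => ex (fun K => (jcode K == carg (jcode J))
                              && (jin K == cpair (jin J) m) && (jout K != 0)))].

Definition justified_seq J r := justified (fun P => has P r) (fun v => v \in r) J.

Fixpoint valid_seq l := if l is J :: r then justified_seq J r && valid_seq r else true.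

Definition justified_code J w := justified (code_has w) (fun v => code_mem v w) J.
Definition valid_code w :=
  all_below w (fun j => ~~ code_has_index w j
                        || justified_code (code_nth w j) (iter j.+1 code_behead w)).

Definition holds J := forall c, code_num c = jcode J -> eval empty_oracle c (jin J) (jout J).
Definition certified J := exists l, valid_seq l /\ J \in l.

Lemma computable_valid_code X : set_computable_in X valid_code.
Proof. by rewrite /valid_code /justified_code /justified /judgment /code_behead; computability. Qed.

Lemma justified_mono (ex1 ex2 : (nat -> bool) -> bool) (m1 m2 : nat -> bool) J :
  (forall P Q : nat -> bool, (forall k, P k -> Q k) -> ex1 P -> ex2 Q) ->
  (forall v, m1 v -> m2 v) -> justified ex1 m1 J -> justified ex2 m2 J.
Proof.
move=> ex12 m12; rewrite /justified.
case: (ctag (jcode J)) => [|[|[|[|[|[|[|[|[|[|t]]]]]]]]]] //=; rewrite ?orbF.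
- by apply: ex12 => k /andP [-> /m12 ->].
- by move=> /andP [/m12 -> /m12 ->].
- rewrite /ite; case: ifP => _; first exact: m12.
  by apply: ex12 => k /andP [-> /m12 ->].
- move=> /andP [/m12 -> /allP H] /=.
  by apply/allP => m /H; apply: ex12 => k /andP [-> ->].
Qed.

Lemma justified_code_seq J r : justified_code J (seq_code r) = justified_seq J r.
Proof.
apply/idP/idP; apply: justified_mono => [P Q PQ|v];
  rewrite ?code_has_seq_code ?code_mem_seq_code // => /hasP [x r_x Px];
  by apply/hasP; exists x => //; apply: PQ.
Qed.

Lemma valid_seq_nth l :
  valid_seq l = [forall j : 'I_(size l), justified_seq (nth 0 l j) (drop j.+1 l)].
Proof.
elim: l => [|J r IH] /=; first by apply/esym/forallP => -[].
rewrite IH; apply/andP/forallP => [[HJ /forallP Hr] [[|j] lt_j] /=|H].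
- by rewrite drop0.
- exact: (Hr (Ordinal (lt_j : j < size r))).
- split; first by have := H (Ordinal (isT : 0 < (size r).+1)); rewrite /= drop0.
  by apply/forallP => -[j lt_j]; have := H (Ordinal (lt_j : j.+1 < (size r).+1)).
Qed.

Lemma valid_code_seq l : valid_code (seq_code l) = valid_seq l.
Proof.
rewrite valid_seq_nth /valid_code /all_below.
apply/allP/forallP => [H [j lt_j]|H j].
  have lt_jw : j < seq_code l by apply: leq_trans (size_le_seq_code l).
  have := H j; rewrite mem_iota add0n lt_jw /=.
  rewrite code_has_index_seq_code lt_j /= code_nth_seq_code // -iterS iter_code_behead.
  by rewrite justified_code_seq; apply.
rewrite mem_iota add0n /= => _.
rewrite code_has_index_seq_code; case: (ltnP j (size l)) => //= lt_j.
rewrite code_nth_seq_code // -iterS iter_code_behead justified_code_seq.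
exact: (H (Ordinal lt_j)).
Qed.

Lemma justified_seq_subset J r r' :
  {subset r <= r'} -> justified_seq J r -> justified_seq J r'.
Proof.
move=> rr'; apply: justified_mono => [P Q PQ /hasP [x r_x Px]|v /rr' //].
by apply/hasP; exists x; [apply: rr' | apply: PQ].
Qed.

Lemma valid_seq_cat l1 l2 : valid_seq l1 -> valid_seq l2 -> valid_seq (l1 ++ l2).
Proof.
elim: l1 => //= J r IH /andP [HJ Hr] V2; rewrite IH // andbT.
by apply: justified_seq_subset HJ => v r_v; rewrite mem_cat r_v.
Qed.

Lemma judgmentE J : J = judgment (jcode J) (jin J) (jout J).
Proof. by rewrite /judgment !cpair_unpair. Qed.

Lemma justified_seq_sound J r :
  (forall K, K \in r -> holds K) -> justified_seq J r -> holds J.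
Proof.
move=> IH HJ c Hc; move: HJ; rewrite (judgmentE J) -Hc.
set x := jin J; set y := jout J; clearbody x y.
rewrite /justified_seq /justified /judgment !(cfst_cpair, csnd_cpair).
case: c {Hc} => [||||||f g|f g|f g|f] /=; rewrite ?(cfst_cpair, csnd_cpair) /= ?orbF.
- by move/eqP ->; constructor.
- by move/eqP ->; constructor.
- by move/eqP ->; constructor.
- by move/eqP ->; exact: eval_cfst.
- by move/eqP ->; exact: eval_csnd.
- by move/eqP ->; have := ev_oracle empty_oracle x.
- move=> /hasP [K r_K /andP [/andP [/eqP HK1 /eqP HK2] Hf]].
  have Eg := IH _ r_K g (esym HK1); rewrite HK2 in Eg.
  have Ef := IH _ Hf f; rewrite /judgment !(cfst_cpair, csnd_cpair) in Ef.
  exact: ev_comp Eg (Ef erefl).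
- move=> /andP [Hf Hg].
  have Ef := IH _ Hf f; have Eg := IH _ Hg g.
  rewrite /judgment !(cfst_cpair, csnd_cpair) in Ef Eg.
  by rewrite -(cpair_unpair y); apply: ev_pair; [apply: Ef | apply: Eg].
- have [a [n ->]] : exists a n, x = cpair a n.
    by exists (cfst x), (csnd x); rewrite cpair_unpair.
  rewrite /ite !(cfst_cpair, csnd_cpair); case: n => [|n] /=.
    move=> Hf; have Ef := IH _ Hf f; rewrite /judgment !(cfst_cpair, csnd_cpair) in Ef.
    by apply: ev_rec0; apply: Ef.
  move=> /hasP [K r_K /andP [/andP [/eqP HK1 /eqP HK2] Hg]].
  have Erec := IH _ r_K (cRec f g) (esym HK1); rewrite HK2 in Erec.
  have Eg := IH _ Hg g; rewrite /judgment !(cfst_cpair, csnd_cpair) in Eg.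
  exact: ev_recS Erec (Eg erefl).
- move=> /andP [Hf /allP Hbelow].
  have Ef := IH _ Hf f; rewrite /judgment !(cfst_cpair, csnd_cpair) in Ef.
  apply: ev_mu; first exact: Ef.
  move=> m lt_m; have := Hbelow m; rewrite mem_iota add0n /= => /(_ lt_m).
  move=> /hasP [K r_K /andP [/andP [/eqP HK1 /eqP HK2] HK3]].
  have EK := IH _ r_K f (esym HK1); rewrite HK2 in EK.
  by exists (jout K).-1; rewrite prednK // lt0n.
Qed.

Lemma valid_seq_sound l : valid_seq l -> forall J, J \in l -> holds J.
Proof.
elim: l => // J r IH /= /andP [HJ Hr] K; rewrite inE => /orP [/eqP ->|]; last exact: IH.
exact: justified_seq_sound (IH Hr) HJ.
Qed.

Lemma certified_of_justified J l1 l2 : valid_seq l1 -> valid_seq l2 ->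
  (forall r, {subset l1 <= r} -> {subset l2 <= r} -> justified_seq J r) -> certified J.
Proof.
move=> V1 V2 HJ; exists (J :: l1 ++ l2).
rewrite /= valid_seq_cat // inE eqxx andbT; split=> //.
by apply: HJ => v Hv; rewrite mem_cat Hv ?orbT.
Qed.

Lemma valid_seq_gather n (A : nat -> seq nat -> Prop) :
  (forall m l l', A m l -> {subset l <= l'} -> A m l') ->
  (forall m, m < n -> exists l, valid_seq l /\ A m l) ->
  exists l, valid_seq l /\ forall m, m < n -> A m l.
Proof.
move=> A_mono; elim: n => [|n IH] H; first by exists [::].
have [|l1 [V1 H1]] := IH; first by move=> m lt_m; apply: H; lia.
have [l2 [V2 H2]] := H n (ltnSn n).
exists (l1 ++ l2); split; first exact: valid_seq_cat.
move=> m; rewrite ltnS leq_eqVlt => /orP [/eqP ->|lt_m].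
  by apply: A_mono H2 _ => v Hv; rewrite mem_cat Hv orbT.
by apply: A_mono (H1 _ lt_m) _ => v Hv; rewrite mem_cat Hv.
Qed.

Section CertifiedRules.
Local Notation certified_eval c x y := (certified (judgment (code_num c) x y)).

Lemma certified_axiom J : justified_seq J [::] -> certified J.
Proof. by move=> HJ; exists [:: J]; rewrite /= HJ inE eqxx. Qed.

Lemma certified_comp f g x y z :
  certified_eval g x y -> certified_eval f y z -> certified_eval (cComp f g) x z.
Proof.
move=> [l1 [V1 I1]] [l2 [V2 I2]]; apply: (certified_of_justified V1 V2) => r S1 S2.
rewrite /justified_seq /justified /judgment !(cfst_cpair, csnd_cpair) /= ?orbF.
apply/hasP; exists (judgment (code_num g) x y); first exact: S1.
by rewrite /judgment !(cfst_cpair, csnd_cpair) !eqxx /=; apply: S2.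
Qed.

Lemma certified_pair f g x y z :
  certified_eval f x y -> certified_eval g x z -> certified_eval (cPair f g) x (cpair y z).
Proof.
move=> [l1 [V1 I1]] [l2 [V2 I2]]; apply: (certified_of_justified V1 V2) => r S1 S2.
rewrite /justified_seq /justified /judgment !(cfst_cpair, csnd_cpair) /=.
by rewrite (S1 _ I1) (S2 _ I2).
Qed.

Lemma certified_rec0 f g x y :
  certified_eval f x y -> certified_eval (cRec f g) (cpair x 0) y.
Proof.
move=> [l1 [V1 I1]]; apply: (certified_of_justified V1 (l2 := [::])) => // r S1 _.
by rewrite /justified_seq /justified /judgment /ite !(cfst_cpair, csnd_cpair) /= S1.
Qed.

Lemma certified_recS f g x n y z :
  certified_eval (cRec f g) (cpair x n) y -> certified_eval g (cpair x (cpair n y)) z ->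
  certified_eval (cRec f g) (cpair x n.+1) z.
Proof.
move=> [l1 [V1 I1]] [l2 [V2 I2]]; apply: (certified_of_justified V1 V2) => r S1 S2.
rewrite /justified_seq /justified /judgment /ite !(cfst_cpair, csnd_cpair) /= ?orbF.
apply/hasP; exists (judgment (code_num (cRec f g)) (cpair x n) y); first exact: S1.
by rewrite /judgment !(cfst_cpair, csnd_cpair) !eqxx /=; apply: S2.
Qed.

Lemma certified_mu f x n : certified_eval f (cpair x n) 0 ->
  (forall m, m < n -> exists k, certified_eval f (cpair x m) k.+1) ->
  certified_eval (cMu f) x n.
Proof.
move=> [l1 [V1 I1]] below_n.
pose A m (l : seq nat) := exists k, judgment (code_num f) (cpair x m) k.+1 \in l.
have [l2 [V2 I2]] : exists l, valid_seq l /\ forall m, m < n -> A m l.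
  apply: valid_seq_gather => [m l l' [k Hk] S|m lt_m]; first by exists k; apply: S.
  by have [k [l [V I]]] := below_n m lt_m; exists l; split => //; exists k.
apply: (certified_of_justified V1 V2) => r S1 S2.
rewrite /justified_seq /justified /judgment !(cfst_cpair, csnd_cpair) /=.
rewrite (S1 _ I1) /=; apply/allP => m; rewrite mem_iota add0n /= => lt_m.
have [k Hk] := I2 m lt_m; apply/hasP; exists (judgment (code_num f) (cpair x m) k.+1).
  exact: S2.
by rewrite /judgment !(cfst_cpair, csnd_cpair) !eqxx.
Qed.

End CertifiedRules.

Lemma eval_certified : forall c x y, eval empty_oracle c x y ->
  certified (judgment (code_num c) x y).
Proof.
fix IH 4 => c x y H; destruct H.
1-6: by apply: certified_axiom; rewrite /justified_seq /justified /judgment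
            !(cfst_cpair, csnd_cpair) /= ?eqxx ?orbT.
- exact: certified_comp (IH _ _ _ H) (IH _ _ _ H0).
- exact: certified_pair (IH _ _ _ H) (IH _ _ _ H0).
- exact: certified_rec0 (IH _ _ _ H).
- exact: certified_recS (IH _ _ _ H) (IH _ _ _ H0).
- apply: certified_mu (IH _ _ _ H) _ => m lt_m.
  by case: (H0 m lt_m) => k Hk; exists k; exact: IH _ _ _ Hk.
Qed.

(** * Finite sets by canonical codes *)

Definition canon_code B (P : nat -> bool) :=
  prim_rec 0 (fun k acc => acc + nat_of_bool (P k) * 2 ^ k) B.

Lemma canset_small c x : c < 2 ^ x -> canset c x = false.
Proof. by move=> lt_c; rewrite /canset divn_small. Qed.

Lemma canset_lt c x : canset c x -> x < c.
Proof.
move=> cx; case: (ltnP x c) => // le_cx.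
have /canset_small : c < 2 ^ x by apply: leq_ltn_trans le_cx (ltn_expl _ (isT : 1 < 2)).
by rewrite cx.
Qed.

Lemma canset_add c k x : c < 2 ^ k ->
  canset (c + 2 ^ k) x = (x == k) || (x < k) && canset c x.
Proof.
move=> lt_c; rewrite /canset; case: (ltngtP x k) => lt_xk /=.
- have -> : 2 ^ k = 2 ^ (k - x) * 2 ^ x by rewrite -expnD subnK // ltnW.
  rewrite divnDMl ?expn_gt0 // oddD oddX /= subn_eq0 leqNgt lt_xk.
  by rewrite addbF.
- rewrite divn_small //.
  apply: (@leq_trans (2 ^ k.+1)); last by rewrite leq_exp2l.
  by rewrite expnS; lia.
- by subst x; rewrite -{1}(mul1n (2 ^ k)) divnDMl ?expn_gt0 // divn_small.
Qed.

Lemma canon_code_lt B P : canon_code B P < 2 ^ B.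
Proof.
elim: B => [|B IH] //; rewrite /canon_code /= -/(canon_code B P) expnS.
by case: (P B) => /=; lia.
Qed.

Lemma canset_canon_code B P x : canset (canon_code B P) x = (x < B) && P x.
Proof.
elim: B => [|B IH]; first by rewrite /canon_code /= /canset div0n.
rewrite /canon_code /= -/(canon_code B P) ltnS.
case PB: (P B) => /=; rewrite ?mul1n ?canset_add ?canon_code_lt // ?mul0n ?addn0 IH;
  by case: (ltngtP x B) => //= ->; rewrite PB.
Qed.

(** * Enumerating an infinite set *)

Lemma count_belowS n P : count_below n.+1 P = count_below n P + P n.
Proof. by rewrite /count_below iota0S -cats1 count_cat /= addn0. Qed.

Lemma count_below_mono P : {homo count_below^~ P : m n / m <= n}.
Proof. by apply: homo_leq leqnn leq_trans _ => n; rewrite count_belowS leq_addr. Qed.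

Lemma count_below_unbounded H : infinite_set H -> forall n, exists x, n < count_below x.+1 H.
Proof.
move=> H_inf; elim=> [|n [x lt_n]].
  by have [x [_ Hx]] := H_inf 0; exists x; rewrite count_belowS Hx addn1.
have [y [lt_xy Hy]] := H_inf x.+1; exists y.
by rewrite count_belowS Hy; have := count_below_mono H lt_xy; lia.
Qed.

Definition enum_inf H (H_inf : infinite_set H) n : nat :=
  ex_minn (count_below_unbounded H_inf n).

Section EnumInf.
Variables (H : nat -> bool) (H_inf : infinite_set H).

Lemma enum_inf_count n : count_below (enum_inf H_inf n) H = n /\ H (enum_inf H_inf n).
Proof.
rewrite /enum_inf; case: ex_minnP => m lt_n min_m.
have : count_below m H <= n.
  case: m lt_n min_m => [|m] lt_n min_m; first by rewrite /count_below.
  by case: (leqP (count_below m.+1 H) n) => // /min_m; lia.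
by move: lt_n; rewrite count_belowS; case: (H m) => /=; lia.
Qed.

Lemma enum_inf_min n m : n < count_below m.+1 H -> enum_inf H_inf n <= m.
Proof. by rewrite /enum_inf; case: ex_minnP => k _; apply. Qed.

Lemma enumerates_enum_inf : enumerates (enum_inf H_inf) H.
Proof.
split=> [n|x].
  have [E1 _] := enum_inf_count n; have [E2 _] := enum_inf_count n.+1.
  case: ltnP => // le_n; have := count_below_mono H le_n; lia.
split=> [Hx|[n <-]]; last by case: (enum_inf_count n).
exists (count_below x H).
have le_x : enum_inf H_inf (count_below x H) <= x.
  by apply: enum_inf_min; rewrite count_belowS Hx addn1.
have [E HE] := enum_inf_count (count_below x H).
case: (ltnP (enum_inf H_inf (count_below x H)) x) => [lt_x|]; last first.
  by move=> ge_x; apply/eqP; rewrite eqn_leq le_x.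
by have := count_below_mono H lt_x; rewrite count_belowS HE; lia.
Qed.

Lemma computable_enum_inf X : set_computable_in X H -> computable_in X (enum_inf H_inf).
Proof.
move=> HX; apply: (computable_mu (F := fun n m => nat_of_bool (count_below m.+1 H <= n))).
  by computability.
move=> n; split.
  have [E Hn] := enum_inf_count n.
  by rewrite count_belowS E Hn addn1 ltnn.
move=> m lt_m; case: leqP => //= /enum_inf_min; lia.
Qed.

End EnumInf.

Lemma computable_search X (P : nat -> nat -> bool) :
  set_computable_in X (fun z => P (cfst z) (csnd z)) -> (forall n, exists m, P n m) ->
  exists g, computable_in X g /\ forall n, P n (g n).
Proof.
move=> HP P_ex; exists (fun n => ex_minn (P_ex n)); split; last first.
  by move=> n; case: ex_minnP.
apply: (computable_mu (F := fun n m => nat_of_bool (~~ P n m))); first by computability.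
move=> n; case: ex_minnP => m -> min_m; split=> // k lt_k.
by case: (boolP (P n k)) => // /min_m; lia.
Qed.

(** * From a hyperimmune set to a pandemic numbering *)

(* [x] is certified to lie in the set decided by the program numbered [i]
   by a certificate coded below [b.+1]. *)
Definition certified_in i b x :=
  has_below b.+1 (fun w => valid_code w && code_mem (judgment i x 1) w).
Definition certified_code i b := canon_code b.+1 (certified_in i b).
Definition certified_count i b := count_below b.+1 (certified_in i b).

(* Odd indices list every finite set; the even index [2 <i, n>] lists the
   elements certified, within budget [p n], to lie in the set decided by
   the program numbered [i]. *)
Definition pandemic_numbering (p : nat -> nat) e :=
  ite (odd e) (e %/ 2) (certified_code (cfst (e %/ 2)) (p (csnd (e %/ 2)))).

Lemma pandemic_numbering_odd p c : pandemic_numbering p c.*2.+1 = c.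
Proof.
rewrite /pandemic_numbering /ite /= odd_double /=.
by rewrite -muln2 -addn1 divnMDl // divn_small // addn0.
Qed.

Lemma pandemic_numbering_even p i n :
  pandemic_numbering p (cpair i n).*2 = certified_code i (p n).
Proof.
by rewrite /pandemic_numbering /ite odd_double -muln2 mulnK // cfst_cpair csnd_cpair.
Qed.

Lemma numbering_pandemic_numbering p : numbering (pandemic_numbering p).
Proof.
move=> s; exists (canon_code (\max_(y <- s) y).+1 (fun y => y \in s)).*2.+1 => x.
rewrite pandemic_numbering_odd canset_canon_code ltnS andb_idl // => s_x.
exact: (leq_bigmax_seq _ s_x).
Qed.

Lemma computes_pandemic_numbering X p :
  computable_in X p -> computes_numbering X (pandemic_numbering p).
Proof.
move=> Hp; have HV := computable_valid_code X.
have HD : computable_in X (pandemic_numbering p).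
  by rewrite /pandemic_numbering /certified_code /canon_code /certified_in /judgment;
    computability.
split=> //.
have [c Hc] : computable_in X (fun z => canset (pandemic_numbering p (cfst z)) (csnd z)).
  by rewrite /canset; computability.
by exists c => a b; have := Hc (cpair a b); rewrite cfst_cpair csnd_cpair.
Qed.

Lemma has_below_mono m n (P Q : nat -> bool) :
  m <= n -> (forall x, P x -> Q x) -> has_below m P -> has_below n Q.
Proof.
move=> le_mn PQ /hasP [x lt_x Px]; apply/hasP; exists x; last exact: PQ.
by move: lt_x; rewrite !mem_iota !add0n /= => /leq_trans; apply.
Qed.

Lemma certified_in_mono i b b' x : b <= b' -> certified_in i b x -> certified_in i b' x.
Proof. by move=> le_b; apply: has_below_mono. Qed.

Lemma certified_count_mono i : {homo certified_count i : b b' / b <= b'}.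
Proof.
move=> b b' le_b; apply: (@leq_trans (count_below b'.+1 (certified_in i b))).
  exact: count_below_mono.
by apply: sub_count => x; apply: certified_in_mono.
Qed.

Lemma card_certified_code i b :
  card_geq (canset (certified_code i b)) (certified_count i b).
Proof.
exists [seq x <- iota 0 b.+1 | certified_in i b x].
split; first by rewrite filter_uniq ?iota_uniq.
split; first by rewrite size_filter.
apply/allP => x; rewrite mem_filter mem_iota /certified_code canset_canon_code.
by case/andP => -> /andP [_ ->].
Qed.

Section CertifiedMembers.
Variables (c : code) (R : nat -> bool).
Hypothesis c_decides_R : forall x, eval empty_oracle c x (R x).

Lemma certified_in_sound b x : certified_in (code_num c) b x -> R x.
Proof.
case/hasP => w _ /andP [Vw w_x]; have [l El] := seq_code_surj w; subst w.
rewrite valid_code_seq in Vw; rewrite code_mem_seq_code in w_x.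
have := valid_seq_sound Vw w_x (c := c); rewrite /judgment !(cfst_cpair, csnd_cpair).
by move=> /(_ erefl) /eval_functional /(_ _ (c_decides_R x)); case: (R x).
Qed.

Lemma certified_in_eventually x : R x ->
  exists b0, forall b, b0 <= b -> certified_in (code_num c) b x.
Proof.
move=> Rx; have E : eval empty_oracle c x 1 by have := c_decides_R x; rewrite Rx.
have [l [Vl l_x]] := eval_certified E.
exists (seq_code l) => b le_b; apply/hasP; exists (seq_code l).
  by rewrite mem_iota add0n /= ltnS.
by rewrite valid_code_seq code_mem_seq_code Vl.
Qed.

Lemma certified_code_sub b : subset_of (canset (certified_code (code_num c) b)) R.
Proof.
by move=> x; rewrite canset_canon_code => /andP [_ /certified_in_sound].
Qed.

Lemma certified_count_unbounded : infinite_set R ->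
  forall K, exists b, K <= certified_count (code_num c) b.
Proof.
move=> R_inf; elim=> [|K [b le_K]]; first by exists 0.
have [x [lt_bx Rx]] := R_inf b.+1.
have [b0 Hb0] := certified_in_eventually Rx.
exists (maxn b0 x).
have new_x : certified_in (code_num c) (maxn b0 x) x by apply: Hb0; exact: leq_maxl.
have : count_below x.+1 (certified_in (code_num c) (maxn b0 x))
       <= certified_count (code_num c) (maxn b0 x).
  by apply: count_below_mono; rewrite ltnS leq_maxr.
rewrite count_belowS new_x.
have : certified_count (code_num c) b <= count_below x (certified_in (code_num c) (maxn b0 x)).
  rewrite /certified_count; apply: leq_trans (count_below_mono _ lt_bx) _.
  by apply: sub_count => y; apply: certified_in_mono; lia.
lia.
Qed.

End CertifiedMembers.

Lemma order_function_add2 : order_function (fun e => e.+2).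
Proof.
split; first by rewrite /recursive; computability.
by split=> [m n|]; [rewrite ltnS | split=> // N; exists N; lia].
Qed.

Lemma pandemic_numbering_pandemic p :
  (forall g, recursive g -> forall N, exists n, N <= n /\ g n < p n) ->
  pandemic (pandemic_numbering p).
Proof.
move=> p_escapes; exists (fun e => e.+2); split; first exact: order_function_add2.
move=> R R_inf [c c_decides_R] N; set i := code_num c.
have [g [g_rec Hg]] : exists g, recursive g /\
    forall n, (cpair i n).*2.+2 <= certified_count i (g n).
  apply: (computable_search (P := fun n b => (cpair i n).*2.+2 <= certified_count i b)).
    have HV := computable_valid_code empty_oracle.
    by rewrite /certified_count /certified_in /judgment; computability.
  by move=> n; apply: certified_count_unbounded.
have [n [le_Nn lt_gp]] := p_escapes g g_rec N.
exists (cpair i n).*2; rewrite pandemic_numbering_even.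
split; first by have := leq_cpair_r i n; lia.
split; last exact: certified_code_sub.
have [s [s_uniq [s_size s_sub]]] := card_certified_code i (p n).
exists s; split=> //; split=> //.
by apply: leq_trans (Hg n) (leq_trans (certified_count_mono i (ltnW lt_gp)) s_size).
Qed.

Lemma pandemic_of_hyperimmune X H : set_computable_in X H -> hyperimmune H ->
  exists D, numbering D /\ computes_numbering X D /\ pandemic D.
Proof.
move=> HX [H_inf H_hyp]; exists (pandemic_numbering (enum_inf H_inf)).
split; first exact: numbering_pandemic_numbering.
split; first by apply: computes_pandemic_numbering; apply: computable_enum_inf.
apply: pandemic_numbering_pandemic => g g_rec N.
apply: NNPP => g_dominates; apply: (H_hyp _ (enumerates_enum_inf H_inf)).
exists g; split=> //; exists N => n le_Nn; rewrite leqNgt; apply/negP => lt_gp.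
by apply: g_dominates; exists n.
Qed.

(** * From a pandemic numbering to a hyperimmune set *)

Definition majorant (D : nat -> nat) n :=
  prim_rec (D 0).+1 (fun k acc => acc + (D k.+1).+1) n.
Definition majorant_range D x := has_below x.+1 (fun n => majorant D n == x).

Lemma majorant_incr D n : majorant D n < majorant D n.+1.
Proof. by rewrite /majorant /=; lia. Qed.

Lemma gtn_majorant D n : n < majorant D n.
Proof. by elim: n => [|n IH] //; have := majorant_incr D n; lia. Qed.

Lemma majorant_gt D n : D n < majorant D n.
Proof. by case: n => [|n]; rewrite /majorant /=; lia. Qed.

Lemma majorant_rangeP D x : reflect (exists n, majorant D n = x) (majorant_range D x).
Proof.
rewrite /majorant_range /has_below.
apply: (iffP hasP) => [[n _ /eqP <-]|[n <-]]; first by exists n.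
exists n => //; rewrite mem_iota add0n ltnS /=; exact: ltnW (gtn_majorant D n).
Qed.

Lemma leq_of_range_sub (p f : nat -> nat) :
  (forall n, p n < p n.+1) -> (forall n, f n < f n.+1) ->
  (forall m, exists k, f k = p m) -> forall n, f n <= p n.
Proof.
move=> p_incr f_incr p_sub_f.
have f_mono := ltnW_homo (homo_ltn ltn_trans f_incr).
suff index_ge n : exists k, n <= k /\ f k = p n.
  by move=> n; have [k [le_nk <-]] := index_ge n; exact: f_mono.
elim: n => [|n [k [le_nk fk]]]; first by have [k fk] := p_sub_f 0; exists k.
have [k' fk'] := p_sub_f n.+1; exists k'; split=> //.
case: (ltnP k k') => [|le_k'k]; first lia.
by have := f_mono _ _ le_k'k; have := p_incr n; lia.
Qed.

Lemma enumerates_majorant_range D p : enumerates p (majorant_range D) -> p =1 majorant D.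
Proof.
move=> [p_incr p_range] n; apply/eqP; rewrite eqn_leq; apply/andP; split.
  apply: (@leq_of_range_sub (majorant D) p (majorant_incr D) p_incr) => m.
  by apply/p_range/majorant_rangeP; exists m.
apply: (@leq_of_range_sub p (majorant D) p_incr (majorant_incr D)) => m.
by apply/majorant_rangeP/p_range; exists m.
Qed.

Definition prefix_max (g : nat -> nat) j :=
  prim_rec (g 0) (fun k acc => maxn acc (g k.+1)) j.

Lemma prefix_max_mono g : {homo prefix_max g : m n / m <= n}.
Proof. by apply: homo_leq leqnn leq_trans _ => j; rewrite /prefix_max /= leq_maxl. Qed.

Lemma leq_prefix_max g j : g j <= prefix_max g j.
Proof. by case: j => [|j] //=; rewrite leq_maxr. Qed.

Lemma recursive_level h : order_function h ->
  exists E, recursive E /\ forall k, k.+2 <= h (E k).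
Proof.
case=> h_rec [_ [h_unb _]].
apply: (computable_search (P := fun k e => k.+2 <= h e)); first by computability.
by move=> k; exact: h_unb.
Qed.

(* Among the numbers [G (E k) + k] below [G e], only those with [E k < e] occur,
   hence [k < (h e).-1]: too few of them to fill a set of size [h e]. *)
Lemma card_lt_sparse (h E G : nat -> nat) (A : nat -> bool) e :
  {homo h : m n / m <= n} -> {homo G : m n / m <= n} -> 0 < h e ->
  (forall k, k.+2 <= h (E k)) ->
  (forall x, A x -> x < G e /\ exists k, G (E k) + k = x) -> ~ card_geq A (h e).
Proof.
move=> h_mono G_mono h_pos hE A_sparse [s [s_uniq [s_size s_A]]].
suff : {subset s <= map (fun k => G (E k) + k) (iota 0 (h e).-1)}.
  move/(uniq_leq_size s_uniq); rewrite size_map size_iota => /(leq_trans s_size).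
  by rewrite leqNgt ltn_predL h_pos.
move=> x s_x; have [lt_x [k Ek]] := A_sparse x (allP s_A x s_x).
apply/mapP; exists k => //; rewrite mem_iota add0n /=.
have lt_Eke : E k < e.
  by rewrite ltnNge; apply/negP => /G_mono; lia.
by have := hE k; have := h_mono _ _ (ltnW lt_Eke); lia.
Qed.

Lemma majorant_range_hyperimmune D : pandemic D -> hyperimmune (majorant_range D).
Proof.
case=> h [h_order h_endemic]; have [_ [h_mono [_ h0]]] := h_order.
split=> [N|p p_enum [g [g_rec [N g_dom]]]].
  exists (majorant D N); split; first exact: ltnW (gtn_majorant D N).
  by apply/majorant_rangeP; exists N.
have [E [E_rec hE]] := recursive_level h_order.
pose r k := prefix_max g (E k) + k.
pose R x := has_below x.+1 (fun k => r k == x).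
have R_rec : recursive_set R by rewrite /recursive_set /R /r /prefix_max; computability.
have R_inf : infinite_set R.
  move=> M; exists (r M); split; first by rewrite /r; lia.
  by apply/hasP; exists M; rewrite // mem_iota add0n /r /=; lia.
have [e [le_Ne [card_e sub_e]]] := h_endemic R R_inf R_rec N.
apply: (card_lt_sparse h_mono (prefix_max_mono g) _ hE _ card_e).
  by have := h_mono _ _ (leq0n e); lia.
move=> x De_x; split.
  have := canset_lt De_x; have := majorant_gt D e; have := g_dom e le_Ne.
  by rewrite (enumerates_majorant_range p_enum) => ? ? ?; have := leq_prefix_max g e; lia.
by have /hasP [k _ /eqP] := sub_e x De_x; exists k.
Qed.

Lemma hyperimmune_of_pandemic X D : computes_numbering X D -> pandemic D ->
  exists H, set_computable_in X H /\ hyperimmune H.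
Proof.
move=> [_ D_X] D_pan; exists (majorant_range D).
split; last exact: majorant_range_hyperimmune.
by rewrite /set_computable_in /majorant_range /majorant; computability.
Qed.

Unset Implicit Arguments.

Theorem mainTheorem14 (X : oracle) :
  (exists D : nat -> nat, numbering D /\ computes_numbering X D /\ pandemic D) <->
  (exists H : nat -> bool, set_computable_in X H /\ hyperimmune H).
Proof.
split=> [[D [_ [D_X D_pan]]]|[H [H_X H_hyp]]].
- exact: hyperimmune_of_pandemic D_X D_pan.
- exact: pandemic_of_hyperimmune H_X H_hyp.
Qed.
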